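(* Let $r\ge2$ and $\Lambda=\Phi^+_{A_{r+1}}\setminus\{\alpha_{r+1}\}$, where $\alpha_{r+1}=\varepsilon_{r+1}-\varepsilon_{r+2}$. Then \[K_{B_r}(\tilde\alpha_{B_r})=K_\Lambda(2\tilde\alpha_{A_{r+1}}-\alpha_1-\alpha_{r+1}),\] where $\tilde\alpha_{B_r}=\varepsilon_1+\varepsilon_2\in\mathbb{R}^r$ and $2\tilde\alpha_{A_{r+1}}-\alpha_1-\alpha_{r+1}=\alpha_1+2\alpha_2+\cdots+2\alpha_r+\alpha_{r+1}=\varepsilon_1+\varepsilon_2-\varepsilon_{r+1}-\varepsilon_{r+2}\in\mathbb{R}^{r+2}$.
   Context: $\Phi^+_{A_{r+1}}=\{\varepsilon_i-\varepsilon_j:1\le i<j\le r+2\}\subset\mathbb{R}^{r+2}$, $\alpha_i=\varepsilon_i-\varepsilon_{i+1}$; for $\Lambda\subseteq\Phi^+_{A_{r+1}}$, $K_\Lambda(\mu)$ is the number of finite multisets of elements of $\Lambda$ summing to $\mu$. $\Phi^+_{B_r}=\{\varepsilon_i\pm\varepsilon_j:1\le i<j\le r\}\cup\{\varepsilon_i:1\le i\le r\}\subset\mathbb{R}^r$ and $K_{B_r}(\mu)$ is the number of finite multisets of elements of $\Phi^+_{B_r}$ summing to $\mu$. *)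

From HB Require Import structures.
From mathcomp Require Import all_boot all_order all_algebra.
Set Implicit Arguments. Unset Strict Implicit. Unset Printing Implicit Defensive.
Import Order.TTheory GRing.Theory Num.Theory.
Local Open Scope ring_scope.

Definition evec (n k : nat) : 'rV[int]_n := \row_(i < n) ((i == k :> nat)%:R : int).

(* Kostant partition function, generic form: the roots are labelled by a
   finite type T via [root : T -> 'rV[int]_n] (injective in our uses), so a
   finite multiset of roots is a multiplicity function m : T -> nat.
   [kostant root mu N] means: the set of multisets summing to mu is finite
   and has exactly N elements. *)
Definition kostant (T : finType) (n : nat) (root : T -> 'rV[int]_n)
    (mu : 'rV[int]_n) (N : nat) : Prop :=
  exists s : seq {ffun T -> nat},
    [/\ uniq s, size s = N &
        forall m : {ffun T -> nat}, m \in s <-> \sum_(t : T) root t *+ m t = mu].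

(* Lambda = Phi^+_{A_{r+1}} \ {alpha_{r+1}}, roots e_i - e_j (0-indexed i<j
   in 0..r+1), excluding (i,j) = (r, r+1), i.e. eps_{r+1}-eps_{r+2}. *)
Definition labA (r : nat) : pred ('I_(r.+2) * 'I_(r.+2)) :=
  fun p => (p.1 < p.2)%N && ~~ ((nat_of_ord p.1 == r)%N && (nat_of_ord p.2 == r.+1)%N).
Definition LabA (r : nat) := {p : 'I_(r.+2) * 'I_(r.+2) | @labA r p}.
Definition rootA (r : nat) (x : LabA r) : 'rV[int]_(r.+2) :=
  evec r.+2 (val x).1 - evec r.+2 (val x).2.

Definition labB (r : nat) : pred ('I_r * 'I_r * bool) := fun p => (p.1.1 < p.1.2)%N.
Definition LabB (r : nat) := ({p : 'I_r * 'I_r * bool | @labB r p} + 'I_r)%type.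
Definition rootB (r : nat) (x : LabB r) : 'rV[int]_r :=
  match x with
  | inl p => evec r (val p).1.1 +
             (if (val p).2 then evec r (val p).1.2 else - evec r (val p).1.2)
  | inr i => evec r i
  end.

(* Both multisets split into a common part, the roots e_i - e_j with
   i < j < r, and a remainder.  On the A side, coordinates r and r+1 force
   the remainder to be one root e_a - e_r and one root e_b - e_(r+1) with
   a, b < r.  On the B side, adding up all coordinates gives
   2 #{long roots e_i + e_j} + #{short roots e_k} = 2, so the remainder is
   either one long root or two short roots.  The pair (a, b) corresponds to
   the long root e_b + e_a if b < a, and to the short roots e_a, e_b if
   a <= b.  Finiteness holds because the heights j - i >= 1 of the roots
   of an A-side multiset add up to a fixed number. *)

From HB Require Import structures.
From mathcomp Require Import all_boot all_order all_algebra.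
From mathcomp Require Import zify ring.
Import GRing.Theory.
Set Implicit Arguments. Unset Strict Implicit.

Section KostantGeneral.

Variables (T1 T2 : finType) (n1 n2 : nat).
Variables (root1 : T1 -> 'rV[int]_n1) (root2 : T2 -> 'rV[int]_n2).

Lemma kostant_transfer mu1 mu2 N
    (f : {ffun T1 -> nat} -> {ffun T2 -> nat})
    (g : {ffun T2 -> nat} -> {ffun T1 -> nat}) :
  (forall m : {ffun T1 -> nat},
     (\sum_t root1 t *+ m t = mu1)%R -> (\sum_t root2 t *+ f m t = mu2)%R) ->
  (forall m : {ffun T2 -> nat},
     (\sum_t root2 t *+ m t = mu2)%R -> (\sum_t root1 t *+ g m t = mu1)%R) ->
  (forall m : {ffun T1 -> nat}, (\sum_t root1 t *+ m t = mu1)%R -> g (f m) = m) ->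
  (forall m : {ffun T2 -> nat}, (\sum_t root2 t *+ m t = mu2)%R -> f (g m) = m) ->
  kostant root1 mu1 N -> kostant root2 mu2 N.
Proof.
move=> fS gS gK fK [s [us ss hs]].
exists (map f s); split.
- rewrite map_inj_in_uniq // => x y /hs xs /hs ys e.
  by rewrite -(gK _ xs) e gK.
- by rewrite size_map.
- move=> m; split.
  + by case/mapP => x /hs xs ->; apply: fS.
  + move=> ms; apply/mapP; exists (g m); last by rewrite fK.
    by apply/hs; apply: gS.
Qed.

Lemma kostant_of_bounded mu K :
  (forall m : {ffun T1 -> nat}, (\sum_t root1 t *+ m t = mu)%R -> forall t, m t <= K) ->
  exists N, kostant root1 mu N.
Proof.
move=> bounded.
pose cv (g : {ffun T1 -> 'I_K.+1}) : {ffun T1 -> nat} := [ffun t => nat_of_ord (g t)].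
pose s := [seq cv g | g <- enum {ffun T1 -> 'I_K.+1} & (\sum_t root1 t *+ cv g t == mu)%R].
exists (size s), s; split => //.
- rewrite map_inj_uniq; first by rewrite filter_uniq // enum_uniq.
  move=> g1 g2 /ffunP e; apply/ffunP => t; apply/val_inj.
  by have := e t; rewrite !ffunE.
- move=> m; split.
  + by case/mapP => g; rewrite mem_filter => /andP[/eqP h _] ->.
  + move=> ms; have cvK : cv [ffun t => inord (m t)] = m.
      by apply/ffunP => t; rewrite !ffunE inordK // ltnS bounded.
    apply/mapP; exists [ffun t => inord (m t)] => //.
    by rewrite mem_filter mem_enum andbT cvK; apply/eqP.
Qed.

End KostantGeneral.

Section NatSums.

Implicit Types (F G s : nat -> nat) (lo hi b N : nat).

Lemma sum_nat_indl lo hi b G :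
  \sum_(lo <= i < hi) (i == b) * G i = (lo <= b < hi) * G b.
Proof.
rewrite (eq_bigr (fun i => if i == b then G i else 0)); last first.
  by move=> i _; case: eqP => [->|_]; rewrite ?mul1n ?mul0n.
by rewrite -big_mkcond big_nat1_eq; case: ifP; rewrite ?mul1n ?mul0n.
Qed.

Lemma sum_nat_indr lo hi b G :
  \sum_(lo <= i < hi) G i * (i == b) = (lo <= b < hi) * G b.
Proof. by rewrite -sum_nat_indl; apply: eq_bigr => i _; rewrite mulnC. Qed.

Lemma sum_nat_ind lo hi b : \sum_(lo <= i < hi) (i == b : nat) = (lo <= b < hi).
Proof.
rewrite -[RHS]muln1 -(sum_nat_indl lo hi b (fun _ => 1)).
by apply: eq_bigr => i _; rewrite muln1.
Qed.

Lemma leq_sum_nat_term lo hi i F :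
  lo <= i < hi -> F i <= \sum_(lo <= k < hi) F k.
Proof.
move=> hi_i; rewrite (bigD1_seq i) ?mem_index_iota ?iota_uniq //=.
exact: leq_addr.
Qed.

Lemma sum_nat_eq0_term lo hi F :
  \sum_(lo <= k < hi) F k = 0 -> forall i, lo <= i < hi -> F i = 0.
Proof. by move=> F0 i /(leq_sum_nat_term F); rewrite F0 leqn0 => /eqP. Qed.

Lemma sum_nat_eq1_ind N F : \sum_(0 <= i < N) F i = 1 ->
  exists2 a, a < N & forall i, i < N -> F i = (i == a).
Proof.
case/sum_nat_seq_eq1 => a [aN _ Fa1 F0]; exists a; first by rewrite mem_index_iota in aN.
move=> i iN; case: eqVneq => [->//|ia].
by rewrite F0 // mem_index_iota.
Qed.

Lemma sum_nat_if_gt c r F : c < r ->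
  \sum_(0 <= j < r) (if c < j < r then F j else 0) = \sum_(c.+1 <= j < r) F j.
Proof.
move=> cr; rewrite (big_cat_nat (n := c.+1)) //= big1_seq ?add0n.
  by apply: eq_big_nat => j /andP[h1 h2]; rewrite h1 h2.
by move=> j; rewrite mem_index_iota => /andP[_ h]; rewrite ifF //; lia.
Qed.

Lemma sum_nat_if_lt c r F : c < r ->
  \sum_(0 <= i < r) (if i < c < r then F i else 0) = \sum_(0 <= i < c) F i.
Proof.
move=> cr; rewrite (big_cat_nat (n := c)) ?(ltnW cr) //=.
have -> : \sum_(c <= i < r) (if i < c < r then F i else 0) = 0.
  by apply: big1_seq => j; rewrite mem_index_iota => /and3P[_ h _]; rewrite ifF //; lia.
by rewrite addn0; apply: eq_big_nat => j /andP[_ h]; rewrite h cr.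
Qed.

Lemma big_nat_recr2 r F :
  \sum_(0 <= j < r.+2) F j = \sum_(0 <= j < r) F j + F r + F r.+1.
Proof. by rewrite !big_nat_recr. Qed.

(* When [s] sums to at most 2, [first_pos s] and [reach2 s] are the
   indicators of the positions of its first and of its second unit. *)
Definition first_pos s i : nat := (0 < s i) * (\sum_(0 <= k < i) s k == 0).
Definition reach2 s i : nat := (0 < s i) * (\sum_(0 <= k < i.+1) s k == 2).

Lemma sum_first_pos N s :
  \sum_(0 <= i < N) first_pos s i = (0 < \sum_(0 <= k < N) s k).
Proof.
elim: N => [|N IH]; first by rewrite !big_geq.
rewrite !big_nat_recr //= IH /first_pos.
by case: (\sum_(0 <= k < N) s k) => [|x]; case: (s N).
Qed.

Lemma sum_reach2 N s : \sum_(0 <= k < N) s k <= 2 ->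
  \sum_(0 <= i < N) reach2 s i = (\sum_(0 <= k < N) s k == 2).
Proof.
elim: N => [|N IH]; first by rewrite !big_geq.
rewrite !big_nat_recr //= => h; rewrite IH; last by lia.
move: h; rewrite /reach2 big_nat_recr //=.
by case: (\sum_(0 <= k < N) s k) => [|[|[|x]]]; case: (s N) => [|[|[|y]]].
Qed.

Lemma first_pos_reach2 N s c :
  \sum_(0 <= k < N) s k <= 2 -> \sum_(0 <= k < N) s k != 1 -> c < N ->
  first_pos s c + reach2 s c = s c.
Proof.
rewrite /first_pos /reach2 => h1 h2 cN.
rewrite (big_cat_nat (n := c)) ?(ltnW cN) //= (big_ltn cN) /= in h1 h2.
rewrite big_nat_recr //=.
move: h1 h2; move: (\sum_(0 <= k < c) s k) (\sum_(c.+1 <= k < N) s k) (s c) => L R x.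
lia.
Qed.

End NatSums.

Lemma big_sig (R : nmodType) (T : finType) (P : pred T) (F : T -> R) :
  (\sum_(t : {x | P x}) F (val t) = \sum_(x | P x) F x)%R.
Proof.
rewrite (reindex_omap (val : {x | P x} -> T) insub); last first.
  by move=> i Pi; rewrite insubT.
by apply: eq_bigl => -[i iP] /=; rewrite insubT /= eqxx iP.
Qed.

Section OrdinalSums.

Variable n : nat.
Implicit Types (c : 'I_n).

Lemma sum_ord_ind c (F : 'I_n -> nat) :
  (\sum_(j < n) ((c == j :> nat)%:R *+ F j : int) = (F c)%:R)%R.
Proof.
rewrite (bigD1 c) //= big1 ?addr0 ?eqxx // => j /negbTE jc.
by rewrite eq_sym -(inj_eq val_inj) in jc; rewrite /= jc mul0rn.
Qed.

Lemma sum2_ord_ind_row c (F : 'I_n -> 'I_n -> nat) :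
  (\sum_(i < n) \sum_(j < n) ((c == i :> nat)%:R *+ F i j : int))%R
  = Posz (\sum_(j < n) F c j).
Proof.
rewrite (bigD1 c) //= [X in (_ + X)%R]big1 ?addr0.
  by rewrite eqxx -natz natr_sum.
move=> i /negbTE ic; rewrite eq_sym -(inj_eq val_inj) in ic.
by apply: big1 => j _; rewrite /= ic mul0rn.
Qed.

Lemma sum2_ord_ind_col c (F : 'I_n -> 'I_n -> nat) :
  (\sum_(i < n) \sum_(j < n) ((c == j :> nat)%:R *+ F i j : int))%R
  = Posz (\sum_(i < n) F i c).
Proof. by rewrite exchange_big /=; exact: (sum2_ord_ind_row c (fun i j => F j i)). Qed.

End OrdinalSums.

(* Multiplicities indexed by plain naturals and extended by 0 outside the
   label sets, so that the coordinate equations become sums over nat ranges. *)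
Definition mulA r (m : {ffun LabA r -> nat}) (i j : nat) : nat :=
  if (insub i : option 'I_r.+2) is Some i' then
  if (insub j : option 'I_r.+2) is Some j' then
  if (insub (i', j') : option (LabA r)) is Some t then m t else 0 else 0 else 0.

Definition mulB r (m : {ffun LabB r -> nat}) (i j : nat) (b : bool) : nat :=
  if (insub i : option 'I_r) is Some i' then
  if (insub j : option 'I_r) is Some j' then
  if (insub (i', j', b) : option {p : 'I_r * 'I_r * bool | @labB r p}) is Some t
  then m (inl t) else 0 else 0 else 0.

Definition mulS r (m : {ffun LabB r -> nat}) (k : nat) : nat :=
  if (insub k : option 'I_r) is Some k' then m (inr k') else 0.

Definition labA_nat r (i j : nat) := [&& i < j, j < r.+2 & ~~ ((i == r) && (j == r.+1))].

Section Multiplicities.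

Variable r : nat.
Implicit Types (mA : {ffun LabA r -> nat}) (mB : {ffun LabB r -> nat}).

Lemma mulA_val mA (t : LabA r) : mulA mA (val t).1 (val t).2 = mA t.
Proof. by rewrite /mulA !valK /= -surjective_pairing valK. Qed.

Lemma mulA_eq0 mA i j : ~~ labA_nat r i j -> mulA mA i j = 0.
Proof.
move=> h; rewrite /mulA; case: insubP => [i' _ ei|//]; case: insubP => [j' jn ej|//].
rewrite insubF //; apply/negbTE; rewrite /labA /= ei ej; apply: contra h.
by rewrite /labA_nat; case/andP => -> ->; rewrite -ej /= ltn_ord.
Qed.

Lemma mulA_ffun (F : nat -> nat -> nat) i j :
  mulA [ffun t : LabA r => F (val t).1 (val t).2] i j = if labA_nat r i j then F i j else 0.
Proof.
case: ifP => h; last by rewrite mulA_eq0 ?h.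
case/and3P: h => ij jn nh; have iN : i < r.+2 by apply: ltn_trans jn.
rewrite /mulA; case: insubP => [i' _ ei|]; last by rewrite iN.
case: insubP => [j' _ ej|]; last by rewrite jn.
rewrite insubT /=; first by rewrite /labA /= ei ej ij nh.
by move=> lab; rewrite ffunE /= ei ej.
Qed.

Lemma mulA_r mA j : mulA mA r j = 0.
Proof.
apply: mulA_eq0; apply/negP => /and3P[rj jn /negP []].
by rewrite eqxx; apply/eqP; lia.
Qed.

Lemma mulA_r1 mA j : mulA mA r.+1 j = 0.
Proof. by apply: mulA_eq0; apply/negP => /and3P[h1 h2 _]; lia. Qed.

Lemma mulB_val mB (t : {p : 'I_r * 'I_r * bool | @labB r p}) :
  mulB mB (val t).1.1 (val t).1.2 (val t).2 = mB (inl t).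
Proof. by rewrite /mulB !valK /= -!surjective_pairing valK. Qed.

Lemma mulB_eq0 mB i j b : ~~ (i < j < r) -> mulB mB i j b = 0.
Proof.
move=> h; rewrite /mulB; case: insubP => [i' _ ei|//]; case: insubP => [j' jn ej|//].
rewrite insubF //; apply/negbTE; rewrite /labB /= ei ej; apply: contra h => ->.
by rewrite -ej ltn_ord.
Qed.

Lemma mulS_val mB (k : 'I_r) : mulS mB k = mB (inr k).
Proof. by rewrite /mulS valK. Qed.

Lemma mulS_eq0 mB k : r <= k -> mulS mB k = 0.
Proof. by move=> h; rewrite /mulS insubF //; apply/negbTE; rewrite -leqNgt. Qed.

Lemma mulB_ffun (F : nat -> nat -> bool -> nat) (G : nat -> nat) i j b :
  mulB [ffun t : LabB r => match t with
        | inl q => F (val q).1.1 (val q).1.2 (val q).2 | inr k => G k end] i j b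
  = if i < j < r then F i j b else 0.
Proof.
case: ifP => h; last by rewrite mulB_eq0 // h.
case/andP: h => ij jn; have iN : i < r by apply: ltn_trans jn.
rewrite /mulB; case: insubP => [i' _ ei|]; last by rewrite iN.
case: insubP => [j' _ ej|]; last by rewrite jn.
rewrite insubT /=; first by rewrite /labB /= ei ej ij.
by move=> lab; rewrite ffunE /= ei ej.
Qed.

Lemma mulS_ffun (F : nat -> nat -> bool -> nat) (G : nat -> nat) k :
  mulS [ffun t : LabB r => match t with
        | inl q => F (val q).1.1 (val q).1.2 (val q).2 | inr k => G k end] k
  = if k < r then G k else 0.
Proof. by rewrite /mulS; case: insubP => [k' kr ek|/negbTE ->//]; rewrite ffunE ek kr. Qed.

End Multiplicities.

Section Coordinates.

Variable r : nat.
Implicit Types (mA : {ffun LabA r -> nat}) (mB : {ffun LabB r -> nat}).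

Lemma sum_rootA_coord mA (c : 'I_r.+2) :
  (\sum_t rootA t *+ mA t)%R ord0 c =
  ((\sum_(j < r.+2) mulA mA c j)%:Z - (\sum_(i < r.+2) mulA mA i c)%:Z)%R.
Proof.
pose F (i j : 'I_r.+2) : int :=
  (((c == i :> nat)%:R - (c == j :> nat)%:R) *+ mulA mA i j)%R.
rewrite summxE.
under eq_bigr => t _ do rewrite mulmxnE !mxE -(mulA_val mA t).
rewrite (big_sig _ (fun p => F p.1 p.2)) big_mkcond /=.
rewrite (eq_bigr (fun p => F p.1 p.2)); last first.
  by move=> [i j] _; case: ifP => // /negbT h; rewrite /F mulA_eq0 // /labA_nat ltn_ord.
rewrite -(pair_bigA _ F) /F /=.
under eq_bigr => i _ do (rewrite (eq_bigr _ (fun j _ => mulrnBl _ _ _)) sumrB).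
by rewrite sumrB (sum2_ord_ind_row c (mulA mA)) (sum2_ord_ind_col c (mulA mA)).
Qed.

Lemma sum_rootB_coord mB (c : 'I_r) :
  (\sum_t rootB t *+ mB t)%R ord0 c =
  ((\sum_(j < r) mulB mB c j false + \sum_(j < r) mulB mB c j true
    + \sum_(i < r) mulB mB i c true + mulS mB c)%:Z
   - (\sum_(i < r) mulB mB i c false)%:Z)%R.
Proof.
pose F (p : 'I_r * 'I_r * bool) : int :=
  ((evec r p.1.1 + (if p.2 then evec r p.1.2 else - evec r p.1.2)) ord0 c
   *+ mulB mB p.1.1 p.1.2 p.2)%R.
rewrite summxE big_sumType /=.
under [X in (_ + X)%R]eq_bigr => k _ do rewrite mulmxnE !mxE -mulS_val.
rewrite (sum_ord_ind c (mulS mB)).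
under eq_bigr => t _ do rewrite mulmxnE -(mulB_val mB t).
rewrite (big_sig _ F) big_mkcond /= (eq_bigr F); last first.
  by move=> [[i j] b] _; case: ifP => // /negbT h; rewrite /F mulB_eq0 // ltn_ord andbT.
rewrite -(pair_bigA _ (fun q b => F (q, b))) /F /=.
under eq_bigr => q _ do rewrite big_bool /= !mxE.
rewrite -(pair_bigA _ (fun i j : 'I_r =>
   (((c == i :> nat)%:R + (c == j :> nat)%:R) *+ mulB mB i j true
   + ((c == i :> nat)%:R - (c == j :> nat)%:R) *+ mulB mB i j false : int)%R)) /=.
under eq_bigr => i _ do under eq_bigr => j _ do rewrite mulrnDl mulrnBl.
under eq_bigr => i _ do rewrite big_split /= big_split /= sumrB /=.
rewrite big_split /= big_split /= sumrB /=.
rewrite (sum2_ord_ind_row c (fun i j => mulB mB i j true)).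
rewrite (sum2_ord_ind_col c (fun i j => mulB mB i j true)).
rewrite (sum2_ord_ind_row c (fun i j => mulB mB i j false)).
rewrite (sum2_ord_ind_col c (fun i j => mulB mB i j false)).
by rewrite natz !PoszD; ring.
Qed.

End Coordinates.

(* The coordinate equations of both sides, rearranged so that no
   subtraction occurs. *)
Definition solA r (m : {ffun LabA r -> nat}) := forall c, c < r.+2 ->
  \sum_(0 <= j < r.+2) mulA m c j + (c == r) + (c == r.+1) =
  (c == 0) + (c == 1) + \sum_(0 <= i < r.+2) mulA m i c.

Definition solB r (m : {ffun LabB r -> nat}) := forall c, c < r ->
  \sum_(0 <= j < r) mulB m c j false + \sum_(0 <= j < r) mulB m c j true
  + \sum_(0 <= i < r) mulB m i c true + mulS m c =
  (c == 0) + (c == 1) + \sum_(0 <= i < r) mulB m i c false.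

Section Solutions.

Variable r : nat.
Implicit Types (mA : {ffun LabA r -> nat}) (mB : {ffun LabB r -> nat}).

Lemma sum_rootA_eq_iff mA :
  (\sum_t rootA t *+ mA t)%R = (evec r.+2 0 + evec r.+2 1 - evec r.+2 r - evec r.+2 r.+1)%R
  <-> solA mA.
Proof.
split.
- move=> h c cn; have := congr1 (fun v : 'rV[int]_r.+2 => v ord0 (Ordinal cn)) h.
  rewrite sum_rootA_coord !mxE /= !big_mkord !natz.
  move: (c == 0) (c == 1) (c == r) (c == r.+1) => b0 b1 b2 b3.
  move: (\sum_(j < r.+2) mulA mA c j) (\sum_(i < r.+2) mulA mA i c) => A B; lia.
- move=> h; apply/rowP => c; rewrite sum_rootA_coord !mxE /= !natz.
  have := h c (ltn_ord c); rewrite !big_mkord.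
  move: (c == 0 :> nat) (c == 1 :> nat) (c == r :> nat) (c == r.+1 :> nat) => b0 b1 b2 b3.
  move: (\sum_(j < r.+2) mulA mA c j) (\sum_(i < r.+2) mulA mA i c) => A B; lia.
Qed.

Lemma sum_rootB_eq_iff mB :
  (\sum_t rootB t *+ mB t)%R = (evec r 0 + evec r 1)%R <-> solB mB.
Proof.
split.
- move=> h c cn; have := congr1 (fun v : 'rV[int]_r => v ord0 (Ordinal cn)) h.
  rewrite sum_rootB_coord !mxE /= !big_mkord !natz.
  move: (c == 0) (c == 1) => b0 b1.
  move: (\sum_(j < r) mulB mB c j false) (\sum_(j < r) mulB mB c j true)
    (\sum_(i < r) mulB mB i c true) (\sum_(i < r) mulB mB i c false) (mulS mB c).
  move=> A B C D E; lia.
- move=> h; apply/rowP => c; rewrite sum_rootB_coord !mxE /= !natz.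
  have := h c (ltn_ord c); rewrite !big_mkord.
  move: (c == 0 :> nat) (c == 1 :> nat) => b0 b1.
  move: (\sum_(j < r) mulB mB c j false) (\sum_(j < r) mulB mB c j true)
    (\sum_(i < r) mulB mB i c true) (\sum_(i < r) mulB mB i c false) (mulS mB c).
  move=> A B C D E; lia.
Qed.

(* Pairing the equations with the weights [r.+2 - c] telescopes each root
   e_i - e_j into its height j - i >= 1. *)
Lemma solA_height mA : solA mA ->
  \sum_(0 <= i < r.+2) \sum_(0 <= j < r.+2) (j - i) * mulA mA i j <= (r.+2).*2.
Proof.
move=> hs; set n := r.+2; set a := mulA mA.
have split_weight : \sum_(0 <= i < n) \sum_(0 <= j < n) (n - i) * a i j =
    \sum_(0 <= i < n) \sum_(0 <= j < n) (n - j) * a i j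
  + \sum_(0 <= i < n) \sum_(0 <= j < n) (j - i) * a i j.
  rewrite -big_split /=; apply: eq_bigr => i _; rewrite -big_split /=.
  apply: eq_bigr => j _; case: (boolP (labA_nat r i j)) => [/and3P[ij jn _]|h].
    by rewrite -mulnDl; congr (_ * _); lia.
  by rewrite /a mulA_eq0 // !muln0.
have weighted : \sum_(0 <= c < n) (n - c) * (\sum_(0 <= j < n) a c j + (c == r) + (c == r.+1)) =
    \sum_(0 <= c < n) (n - c) * ((c == 0) + (c == 1) + \sum_(0 <= i < n) a i c).
  by apply: eq_big_nat => c /andP[_ cn]; rewrite hs.
have lhs : \sum_(0 <= c < n) (n - c) * (\sum_(0 <= j < n) a c j + (c == r) + (c == r.+1)) =
    \sum_(0 <= i < n) \sum_(0 <= j < n) (n - i) * a i j + (n - r) + (n - r.+1).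
  under eq_bigr => c _ do rewrite !mulnDr.
  rewrite !big_split /= !sum_nat_indr /n ltnS leqnSn ltnS leqnn !mul1n.
  by congr (_ + _ + _); apply: eq_bigr => c _; rewrite big_distrr.
have rhs : \sum_(0 <= c < n) (n - c) * ((c == 0) + (c == 1) + \sum_(0 <= i < n) a i c) =
    n + (n - 1) + \sum_(0 <= i < n) \sum_(0 <= j < n) (n - j) * a i j.
  under eq_bigr => c _ do rewrite !mulnDr.
  rewrite !big_split /= !sum_nat_indr /n !mul1n subn0; congr (_ + _).
  by rewrite exchange_big_nat /=; apply: eq_bigr => c _; rewrite big_distrr.
rewrite weighted in lhs; rewrite lhs split_weight in rhs; rewrite /n in rhs *; lia.
Qed.

Lemma solA_bounded mA : solA mA -> forall t, mA t <= (r.+2).*2.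
Proof.
move=> /solA_height hgt t; rewrite -mulA_val; apply: leq_trans hgt.
set i := nat_of_ord (val t).1; set j := nat_of_ord (val t).2.
have lti : 0 <= i < r.+2 by rewrite /i ltn_ord.
have ltj : 0 <= j < r.+2 by rewrite /j ltn_ord.
apply: leq_trans (leq_sum_nat_term
  (fun i => \sum_(0 <= j < r.+2) (j - i) * mulA mA i j) lti).
apply: leq_trans (leq_sum_nat_term (fun j => (j - i) * mulA mA i j) ltj).
case: (boolP (labA_nat r i j)) => [/andP[ij _]|h]; last by rewrite mulA_eq0.
by rewrite leq_pmull // subn_gt0.
Qed.

End Solutions.

Section Bijection.

Variable r : nat.
Hypothesis r_ge2 : 1 < r.
Implicit Types (mA : {ffun LabA r -> nat}) (mB : {ffun LabB r -> nat}).

Definition xA mA i := mulA mA i r.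
Definition yA mA i := mulA mA i r.+1.

Definition xB mB i := first_pos (mulS mB) i + \sum_(0 <= a < r) mulB mB a i true.
Definition yB mB i := reach2 (mulS mB) i + \sum_(0 <= b < r) mulB mB i b true.

Definition toA mB i j :=
  if j < r then mulB mB i j false else if j == r then xB mB i else yB mB i.

Definition toB_pair mA i j (b : bool) := if b then yA mA i * xA mA j else mulA mA i j.

(* With a, b the endpoints of the A-side remainder, [toB_short mA k] counts
   k once if a = k <= b and once if b = k >= a. *)
Definition toB_short mA k :=
  xA mA k * \sum_(k <= j < r) yA mA j + yA mA k * \sum_(0 <= j < k.+1) xA mA j.

Definition AofB mB : {ffun LabA r -> nat} :=
  [ffun t : LabA r => toA mB (val t).1 (val t).2].

Definition BofA mA : {ffun LabB r -> nat} :=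
  [ffun t : LabB r => match t with
   | inl q => toB_pair mA (val q).1.1 (val q).1.2 (val q).2
   | inr k => toB_short mA k end].

Definition nlongB mB := \sum_(0 <= i < r) \sum_(0 <= j < r) mulB mB i j true.
Definition nshortB mB := \sum_(0 <= k < r) mulS mB k.

Lemma solB_count mB : solB mB -> 2 * nlongB mB + nshortB mB = 2.
Proof.
move=> hs.
have summed : \sum_(0 <= c < r) (\sum_(0 <= j < r) mulB mB c j false
    + \sum_(0 <= j < r) mulB mB c j true + \sum_(0 <= i < r) mulB mB i c true + mulS mB c)
  = \sum_(0 <= c < r) ((c == 0) + (c == 1) + \sum_(0 <= i < r) mulB mB i c false).
  by apply: eq_big_nat => c /andP[_ cr]; rewrite hs.
rewrite !big_split /= !sum_nat_ind in summed.
rewrite [X in _ + X + _ = _]exchange_big_nat [X in _ = _ + X]exchange_big_nat /= in summed.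
rewrite /nlongB /nshortB; move: summed; lia.
Qed.

Lemma sum_xB mB :
  \sum_(0 <= i < r) xB mB i = \sum_(0 <= i < r) first_pos (mulS mB) i + nlongB mB.
Proof. by rewrite /xB big_split /= /nlongB exchange_big_nat. Qed.

Lemma sum_yB mB :
  \sum_(0 <= i < r) yB mB i = \sum_(0 <= i < r) reach2 (mulS mB) i + nlongB mB.
Proof. by rewrite /yB big_split. Qed.

Lemma mulA_AofB_lt mB i j : j < r -> mulA (AofB mB) i j = mulB mB i j false.
Proof.
move=> jr; rewrite mulA_ffun /labA_nat /toA jr; case: ifP => // /negbT h.
by rewrite mulB_eq0 //; apply: contra h => /andP[ij _]; rewrite ij /=; apply/andP; split; lia.
Qed.

Lemma mulA_AofB_r mB i : i < r -> mulA (AofB mB) i r = xB mB i.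
Proof. by move=> ir; rewrite mulA_ffun /labA_nat /toA ltnn eqxx ir /= ifT //; lia. Qed.

Lemma mulA_AofB_r1 mB i : i < r -> mulA (AofB mB) i r.+1 = yB mB i.
Proof.
move=> ir; rewrite mulA_ffun /labA_nat /toA.
have -> : [&& i < r.+1, r.+1 < r.+2 & ~~ ((i == r) && (r.+1 == r.+1))] by lia.
by rewrite !ifF //; lia.
Qed.

Lemma solA_AofB mB : solB mB -> solA (AofB mB).
Proof.
move=> hs; have cnt := solB_count hs.
have sum_first : \sum_(0 <= i < r) first_pos (mulS mB) i = (0 < nshortB mB).
  exact: sum_first_pos.
have sum_second : \sum_(0 <= i < r) reach2 (mulS mB) i = (nshortB mB == 2).
  by rewrite sum_reach2 //; rewrite -/(nshortB mB); lia.
move=> c cn; rewrite !big_nat_recr2.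
have [cr|cr] := ltnP c r.
- rewrite (eq_big_nat _ _ (fun j hj => mulA_AofB_lt mB c (proj2 (andP hj)))).
  rewrite (eq_big_nat _ _ (fun i hi => mulA_AofB_lt mB i cr)).
  rewrite mulA_AofB_r // mulA_AofB_r1 // !mulA_r !mulA_r1.
  rewrite (ltn_eqF cr) (ltn_eqF (ltn_trans cr (ltnSn r))).
  have short_le2 : nshortB mB <= 2 by lia.
  have short_ne1 : nshortB mB != 1 by lia.
  have := hs c cr; rewrite /xB /yB -(first_pos_reach2 short_le2 short_ne1 cr); lia.
- have -> : \sum_(0 <= j < r) mulA (AofB mB) c j = 0.
    rewrite (eq_big_nat _ _ (fun j hj => mulA_AofB_lt mB c (proj2 (andP hj)))).
    by apply: big1_seq => j; rewrite mem_index_iota => /andP[_ jr]; rewrite mulB_eq0 //; lia.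
  have [->|cr1] := eqVneq c r.
    rewrite !mulA_r (eq_big_nat _ _ (fun i hi => mulA_AofB_r mB (proj2 (andP hi)))).
    by rewrite mulA_r1 sum_xB sum_first; move: cnt; lia.
  have -> : c = r.+1 by lia.
  rewrite !mulA_r1 (eq_big_nat _ _ (fun i hi => mulA_AofB_r1 mB (proj2 (andP hi)))).
  by rewrite mulA_r sum_yB sum_second; move: cnt; lia.
Qed.

Lemma solA_ends mA : solA mA ->
  \sum_(0 <= i < r) xA mA i = 1 /\ \sum_(0 <= i < r) yA mA i = 1.
Proof.
move=> hs; have zero_r : \sum_(0 <= j < r) mulA mA r j = 0 by apply: big1 => j _; rewrite mulA_r.
have zero_r1 : \sum_(0 <= j < r) mulA mA r.+1 j = 0.
  by apply: big1 => j _; rewrite mulA_r1.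
split.
- have := hs r (ltnW (ltnSn _)); rewrite !big_nat_recr2 !mulA_r mulA_r1 zero_r /xA; lia.
- have := hs r.+1 (ltnSn _); rewrite !big_nat_recr2 !mulA_r1 mulA_r zero_r1 /yA; lia.
Qed.

Lemma mulB_BofA mA i j b : mulB (BofA mA) i j b = if i < j < r then toB_pair mA i j b else 0.
Proof. exact: mulB_ffun. Qed.

Lemma mulS_BofA mA k : mulS (BofA mA) k = if k < r then toB_short mA k else 0.
Proof. exact: mulS_ffun. Qed.

Lemma mulB_BofA_false mA i j : j < r -> mulB (BofA mA) i j false = mulA mA i j.
Proof.
move=> jr; rewrite mulB_BofA jr andbT /toB_pair; case: ifP => // /negbT h.
by rewrite mulA_eq0 //; apply: contra h => /and3P[].
Qed.

Lemma sum_mulB_BofA_row mA c : c < r ->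
  \sum_(0 <= j < r) mulB (BofA mA) c j true = yA mA c * \sum_(c.+1 <= j < r) xA mA j.
Proof.
move=> cr; rewrite big_distrr /= -(sum_nat_if_gt (fun j => yA mA c * xA mA j) cr).
by apply: eq_bigr => j _; rewrite mulB_BofA.
Qed.

Lemma sum_mulB_BofA_col mA c : c < r ->
  \sum_(0 <= i < r) mulB (BofA mA) i c true = (\sum_(0 <= i < c) yA mA i) * xA mA c.
Proof.
move=> cr; rewrite big_distrl /= -(sum_nat_if_lt (fun i => yA mA i * xA mA c) cr).
by apply: eq_bigr => j _; rewrite mulB_BofA.
Qed.

Lemma solB_BofA mA : solA mA -> solB (BofA mA).
Proof.
move=> hs; have [sum_x sum_y] := solA_ends hs; move=> c cr.
rewrite (eq_big_nat _ _ (fun j hj => mulB_BofA_false mA c (proj2 (andP hj)))).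
rewrite (eq_big_nat _ _ (fun i hi => mulB_BofA_false mA i cr)).
rewrite sum_mulB_BofA_row // sum_mulB_BofA_col // mulS_BofA cr /toB_short.
have := hs c (ltn_trans cr (ltnW (ltnSn _))).
rewrite !big_nat_recr2 mulA_r mulA_r1 -/(xA mA c) -/(yA mA c).
rewrite (ltn_eqF cr) (ltn_eqF (ltn_trans cr (ltnSn r))).
rewrite (big_cat_nat (n := c.+1)) //= in sum_x.
rewrite (big_cat_nat (n := c)) ?(ltnW cr) //= in sum_y.
move: sum_x sum_y.
move: (\sum_(0 <= j < c.+1) xA mA j) (\sum_(c.+1 <= j < r) xA mA j)
  (\sum_(0 <= j < c) yA mA j) (\sum_(c <= j < r) yA mA j) => A B C D.
nia.
Qed.

Lemma solB_cases mB : solB mB ->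
  (nshortB mB = 2 /\ forall i j, mulB mB i j true = 0) \/
  ((forall k, mulS mB k = 0) /\ exists a b, a < b < r /\
     forall i j, mulB mB i j true = (i == a) * (j == b)).
Proof.
move=> hs; have cnt := solB_count hs.
have [long0|long1] : nlongB mB = 0 \/ nlongB mB = 1 by lia.
  left; split; first by lia.
  move=> i j; case: (boolP (i < j < r)) => [/andP[ij jr]|h]; last by rewrite mulB_eq0.
  have ir : 0 <= i < r by lia.
  by apply: (sum_nat_eq0_term (sum_nat_eq0_term long0 ir)); rewrite jr.
right; split.
  move=> k; case: (ltnP k r) => kr; last exact: mulS_eq0.
  by apply: (@sum_nat_eq0_term 0 r (mulS mB)) => //; rewrite -/(nshortB mB); lia.
case: (sum_nat_eq1_ind long1) => a ar ha.
have := ha a ar; rewrite eqxx => /sum_nat_eq1_ind [b br hb].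
have long : forall i j, mulB mB i j true = (i == a) * (j == b).
  move=> i j; case: (ltnP i r) => ir; last first.
    by rewrite mulB_eq0 ?(gtn_eqF (leq_trans ar ir)) //; apply/negP => /andP[h1 h2]; lia.
  case: (ltnP j r) => jr; last first.
    by rewrite mulB_eq0 ?(gtn_eqF (leq_trans br jr)) ?muln0 //; apply/negP => /andP[h1 h2]; lia.
  case: (eqVneq i a) => [->|ia]; first by rewrite hb // mul1n.
  have := ha i ir; rewrite (negbTE ia) => /sum_nat_eq0_term row0.
  by rewrite mul0n row0 // jr.
exists a, b; split => //.
have : mulB mB a b true != 0 by rewrite long !eqxx.
by apply: contraR => h; rewrite mulB_eq0.
Qed.

Lemma yB_xB mB i j : solB mB -> i < j < r -> yB mB i * xB mB j = mulB mB i j true.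
Proof.
move=> hs /andP[ij jr]; rewrite /xB /yB.
case: (solB_cases hs) => [[_ long0]|[short0 [a [b [ab long]]]]].
  rewrite long0 !big1 // !addn0 /first_pos /reach2.
  have : mulS mB i <= \sum_(0 <= k < j) mulS mB k.
    by apply: (leq_sum_nat_term (mulS mB)); rewrite ij.
  rewrite big_nat_recr //=.
  move: (mulS mB i) (mulS mB j) (\sum_(0 <= k < j) mulS mB k) (\sum_(0 <= k < i) mulS mB k).
  move=> x y L M; nia.
rewrite /first_pos /reach2 !short0 !mul0n !add0n.
under eq_bigr => k _ do rewrite long.
under [X in _ * X]eq_bigr => k _ do rewrite long.
rewrite sum_nat_indr sum_nat_indl long; nia.
Qed.

Lemma toB_short_AofB mB k : solB mB -> k < r ->
  xB mB k * \sum_(k <= j < r) yB mB j + yB mB k * \sum_(0 <= j < k.+1) xB mB j = mulS mB k.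
Proof.
move=> hs kr.
case: (solB_cases hs) => [[short2 long0]|[short0 [a [b [ab long]]]]].
  have ex j : xB mB j = first_pos (mulS mB) j by rewrite /xB big1 ?addn0.
  have ey j : yB mB j = reach2 (mulS mB) j by rewrite /yB big1 ?addn0.
  rewrite ex ey (eq_bigr _ (fun j _ => ey j)) (eq_bigr _ (fun j _ => ex j)).
  have split_short := short2.
  rewrite /nshortB (big_cat_nat (n := k)) ?(ltnW kr) //= (big_ltn kr) /= in split_short.
  have total : \sum_(0 <= j < r) reach2 (mulS mB) j = 1 by rewrite sum_reach2 -/(nshortB mB) short2.
  rewrite (big_cat_nat (n := k)) ?(ltnW kr) //= sum_reach2 in total; last by lia.
  rewrite sum_first_pos big_nat_recr //= /reach2 /first_pos big_nat_recr //=.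
  move: total split_short; rewrite -/(reach2 (mulS mB)).
  move: (\sum_(k <= j < r) reach2 (mulS mB) j) (\sum_(0 <= j < k) mulS mB j)
    (\sum_(k.+1 <= j < r) mulS mB j) (mulS mB k) => Y L R x.
  nia.
have ex j : xB mB j = (j == b).
  rewrite /xB /first_pos short0 mul0n add0n.
  by under eq_bigr => a' _ do rewrite long; rewrite sum_nat_indl; lia.
have ey j : yB mB j = (j == a).
  rewrite /yB /reach2 short0 mul0n add0n.
  by under eq_bigr => b' _ do rewrite long; rewrite sum_nat_indr; lia.
rewrite ex ey (eq_bigr _ (fun j _ => ey j)) (eq_bigr _ (fun j _ => ex j)) short0.
by rewrite !sum_nat_ind; nia.
Qed.

Lemma BofAK mB : solB mB -> BofA (AofB mB) = mB.
Proof.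
move=> hs; apply/ffunP => -[q|k]; rewrite ffunE.
  rewrite -mulB_val /toB_pair.
  have ij : (val q).1.1 < (val q).1.2 := valP q.
  have jr : nat_of_ord (val q).1.2 < r := ltn_ord _.
  have ir : nat_of_ord (val q).1.1 < r by apply: ltn_trans jr.
  case: (val q).2; last by rewrite mulA_AofB_lt.
  by rewrite /xA /yA mulA_AofB_r // mulA_AofB_r1 // yB_xB // ij jr.
rewrite -mulS_val /toB_short /xA /yA.
have kr : nat_of_ord k < r := ltn_ord _.
rewrite mulA_AofB_r // mulA_AofB_r1 //.
rewrite (eq_big_nat _ _ (fun j hj => mulA_AofB_r1 mB (proj2 (andP hj)))).
rewrite (eq_big_nat _ _ (fun j (hj : 0 <= j < k.+1) =>
  mulA_AofB_r mB (leq_trans (proj2 (andP hj)) kr))).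
exact: toB_short_AofB.
Qed.

Section Endpoints.

Variables (mA : {ffun LabA r -> nat}) (al be : nat).
Hypotheses (al_lt : al < r) (be_lt : be < r).
Hypotheses (x_al : forall i, i < r -> xA mA i = (i == al))
           (y_be : forall i, i < r -> yA mA i = (i == be)).

Lemma mulB_BofA_true a i :
  mulB (BofA mA) a i true = (a == be) * ((a < i < r) * (i == al)).
Proof.
rewrite mulB_BofA /toB_pair; case: ifP => [/andP[ai ir]|_]; last by rewrite muln0.
by rewrite x_al // y_be ?mul1n //; apply: ltn_trans ir.
Qed.

Lemma mulS_BofA_ends k :
  mulS (BofA mA) k = ((k == al) + (k == be)) * ((k < r) * (al <= be)).
Proof.
rewrite mulS_BofA; case: ifP => kr; last by rewrite muln0.
rewrite /toB_short x_al // y_be //.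
rewrite (eq_big_nat _ _ (fun j hj => y_be (proj2 (andP hj)))).
rewrite (eq_big_nat _ _ (fun j (hj : 0 <= j < k.+1) => x_al (leq_trans (proj2 (andP hj)) kr))).
rewrite !sum_nat_ind; nia.
Qed.

Lemma sum_mulS_BofA N : \sum_(0 <= k < N) mulS (BofA mA) k =
  ((al < N) + (be < N)) * (al <= be).
Proof.
rewrite (eq_bigr _ (fun k _ => mulS_BofA_ends k)).
under eq_bigr => k _ do rewrite mulnDl.
rewrite big_split /= !sum_nat_indl al_lt be_lt; nia.
Qed.

Lemma xB_BofA i : i < r -> xB (BofA mA) i = xA mA i.
Proof.
move=> ir; rewrite /xB /first_pos mulS_BofA_ends sum_mulS_BofA.
rewrite (eq_bigr _ (fun a _ => mulB_BofA_true a i)) sum_nat_indl x_al //; nia.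
Qed.

Lemma yB_BofA i : i < r -> yB (BofA mA) i = yA mA i.
Proof.
move=> ir; rewrite /yB /reach2 mulS_BofA_ends sum_mulS_BofA.
under eq_bigr => b _ do rewrite mulB_BofA_true mulnA.
rewrite sum_nat_indr y_be //; nia.
Qed.

End Endpoints.

Lemma AofBK mA : solA mA -> AofB (BofA mA) = mA.
Proof.
move=> hs; have [sum_x sum_y] := solA_ends hs.
have [al al_lt x_al] := sum_nat_eq1_ind sum_x.
have [be be_lt y_be] := sum_nat_eq1_ind sum_y.
apply/ffunP => t; rewrite ffunE -mulA_val /toA.
have /andP[ij not_last] := valP t.
have jn : nat_of_ord (val t).2 < r.+2 := ltn_ord _.
move: ij not_last jn; move: (nat_of_ord (val t).1) (nat_of_ord (val t).2) => i j ij not_last jn.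
case: (ltnP j r) => jr; first by rewrite mulB_BofA_false.
have ir : i < r by lia.
case: (eqVneq j r) => [->|jr']; first exact (xB_BofA al_lt be_lt x_al y_be ir).
have -> : j = r.+1 by lia.
exact (yB_BofA al_lt be_lt x_al y_be ir).
Qed.

End Bijection.

Local Open Scope ring_scope.

Theorem mainTheorem13 (r : nat) (hr : (2 <= r)%N) :
  exists N : nat,
    kostant (@rootB r) (evec r 0 + evec r 1) N /\
    kostant (@rootA r)
      (evec r.+2 0 + evec r.+2 1 - evec r.+2 r - evec r.+2 r.+1) N.
Proof.
have [N KA] : exists N, kostant (@rootA r)
    (evec r.+2 0 + evec r.+2 1 - evec r.+2 r - evec r.+2 r.+1) N.
  apply: (kostant_of_bounded (K := (r.+2).*2)) => m.
  by move/sum_rootA_eq_iff; apply: solA_bounded.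
exists N; split => //.
apply: (kostant_transfer (f := @BofA r) (g := @AofB r)) KA.
- by move=> m /sum_rootA_eq_iff hs; apply/sum_rootB_eq_iff/solB_BofA.
- by move=> m /sum_rootB_eq_iff hs; apply/sum_rootA_eq_iff/solA_AofB.
- by move=> m /sum_rootA_eq_iff; apply: AofBK.
- by move=> m /sum_rootB_eq_iff; apply: BofAK.
Qed.
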